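(* Let $\alpha>0$, $\Sigma_0$ a symmetric positive definite $d\times d$ matrix with symmetric positive definite square root $\Lambda_0=\Sigma_0^{1/2}$, and for symmetric positive definite $\Sigma$ define $\Psi(\Sigma)=\frac1{(1+\alpha)^{d/2}}|\Sigma|^{-\alpha/2}-\left(1+\frac1\alpha\right)|\Sigma|^{-\alpha/2}\left|I_d+\alpha\Lambda_0\Sigma^{-1}\Lambda_0\right|^{-1/2}$. Then $\Psi$ has a unique minimizer over the set of $d\times d$ symmetric positive definite matrices, namely $\Sigma^\star=\Lambda_0\Lambda_0=\Sigma_0$. *)

From mathcomp Require Import all_boot all_order all_algebra.
From mathcomp Require Import reals exp.
Set Implicit Arguments. Unset Strict Implicit. Unset Printing Implicit Defensive.
Import Order.TTheory GRing.Theory Num.Theory.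
Local Open Scope ring_scope.

Definition spd (R : realType) (d : nat) (A : 'M[R]_d) : Prop :=
  A^T = A /\ forall v : 'rV[R]_d, v != 0 -> 0 < (v *m A *m v^T) 0 0.

Definition Psi (R : realType) (d : nat) (alpha : R) (L0 S : 'M[R]_d) : R :=
  (powR (1 + alpha) (d%:R / 2))^-1 * powR (\det S) (- (alpha / 2))
  - (1 + alpha^-1) * powR (\det S) (- (alpha / 2))
      * powR (\det (1%:M + alpha *: (L0 *m invmx S *m L0))) (- (1 / 2)).

From mathcomp Require Import all_boot all_order all_algebra.
From mathcomp Require Import reals sequences exp.
From mathcomp Require Import spectral.
From mathcomp.real_closed Require Import complex.
From mathcomp Require Import ring lra.
Set Implicit Arguments. Unset Strict Implicit. Unset Printing Implicit Defensive.
Import Order.TTheory GRing.Theory Num.Theory.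
Local Open Scope ring_scope.

(* Put M = Λ0 Σ^-1 Λ0, a positive definite matrix with eigenvalues r_i > 0, so that
   |Σ| = |Σ0| / |M| and |I + αM| = Π_i (1 + α r_i).  The weighted AM-GM inequality
   (1 + α r) / (1 + α) >= r^(α/(1+α)), with equality iff r = 1, gives
   |I + αM| >= (1 + α)^d |M|^(α/(1+α)), with equality iff M = I, i.e. iff Σ = Σ0.
   Substituting this bound, Ψ(Σ) is at least a positive constant times
   y^(1+α) - (1 + 1/α) y^α with y = |M|^(α/(2(1+α))), and by AM-GM again this is
   minimal exactly at y = 1.  Both instances of AM-GM are the tangent-line bound
   exp x >= 1 + x. *)

Section RealInequalities.
Variable R : realType.
Implicit Types a t x l m : R.

Lemma expR_young a t : 0 < a ->
  (1 + a) * expR (a * t) <= 1 + a * expR ((1 + a) * t) ?= iff (t == 0).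
Proof.
move=> a_gt0; apply/leifP; have [->|t_neq0] := eqVneq t 0.
  by rewrite !mulr0 expR0 !mulr1.
(* After division by exp(a t) this is the sum of the tangent-line bounds at -(a t) and t. *)
have tangentN : 1 - a * t < expR (- (a * t)).
  by apply: expR_gt1Dx; rewrite oppr_eq0 mulf_neq0 // gt_eqF.
have tangent : a * (1 + t) < a * expR t by rewrite ltr_pM2l // expR_gt1Dx.
have : (1 + a) * expR (a * t) < (expR (- (a * t)) + a * expR t) * expR (a * t).
  by rewrite ltr_pM2r ?expR_gt0 //; lra.
rewrite [X in _ < X]mulrDl -expRD addNr expR0 -mulrA -expRD.
by rewrite [(1 + a) * t]mulrDl mul1r.
Qed.

Lemma expR_young_gap a t : 0 < a ->
  1 - (1 + a^-1) <= expR ((1 + a) * t) - (1 + a^-1) * expR (a * t) ?= iff (t == 0).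
Proof.
move=> a_gt0; set k := 1 + a^-1; set y := expR (a * t).
have := expR_young t a_gt0; rewrite -(mono_leif (ler_pM2l (_ : 0 < a^-1))) ?invr_gt0 //.
rewrite -(mono_leif (lerD2r (- (a^-1 + k * y)))).
suff [-> ->] : a^-1 * ((1 + a) * y) - (a^-1 + k * y) = 1 - k /\
    a^-1 * (1 + a * expR ((1 + a) * t)) - (a^-1 + k * y) = expR ((1 + a) * t) - k * y by [].
by split; rewrite /k; field; rewrite gt_eqF.
Qed.

Lemma ln_young a x : 0 < a -> 0 < x ->
  ln (1 + a) + a / (1 + a) * ln x <= ln (1 + a * x) ?= iff (x == 1).
Proof.
move=> a_gt0 x_gt0; have a1_gt0 : 0 < 1 + a by lra.
have := expR_young (ln x / (1 + a)) a_gt0.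
have -> : (1 + a) * (ln x / (1 + a)) = ln x by rewrite mulrC divfK ?gt_eqF.
rewrite lnK ?posrE // mulf_eq0 invr_eq0 (gt_eqF a1_gt0) orbF ln_eq0 //.
rewrite -(mono_in_leif (@ler_ln R)) ?posrE ?mulr_gt0 ?expR_gt0 ?addr_gt0 ?mulr_gt0 //.
by rewrite lnM ?posrE ?expR_gt0 // expRK mulrA mulrAC.
Qed.

Lemma ln_prod (I : finType) (f : I -> R) : (forall i, 0 < f i) ->
  ln (\prod_i f i) = \sum_i ln (f i).
Proof.
move=> f_gt0; rewrite -[X in ln X](eq_bigr _ (fun i _ => lnK (f_gt0 i))).
by rewrite -expR_sum expRK.
Qed.

(* Ψ(Σ) in the coordinates l = ln|M| and m = ln|I + αM| - d ln(1 + α), up to a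
   positive factor. *)
Definition Psi_log a l m : R :=
  expR (a / 2 * l) - (1 + a^-1) * expR ((a * l - m) / 2).

Lemma Psi_log_leif a l m : 0 < a -> a / (1 + a) * l <= m ->
  Psi_log a 0 0 <= Psi_log a l m ?= iff (l == 0) && (m == a / (1 + a) * l).
Proof.
move=> a_gt0 lm; set k := 1 + a^-1; set t := a * l / (2 * (1 + a)).
set g := m - a / (1 + a) * l; have g_ge0 : 0 <= g by rewrite subr_ge0.
have -> : Psi_log a l m = expR ((1 + a) * t) - k * expR (a * t - g / 2).
  by rewrite /Psi_log /t /g; congr (expR _ - _ * expR _); field; rewrite gt_eqF ?addr_gt0.
have -> : Psi_log a 0 0 = 1 - k by rewrite /Psi_log !mulr0 subrr mul0r expR0 mulr1.
have -> : (l == 0) = (t == 0).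
  have c_gt0 : 0 < a / (2 * (1 + a)) by rewrite divr_gt0 // mulr_gt0 // addr_gt0.
  by rewrite /t mulrAC mulf_eq0 (gt_eqF c_gt0).
rewrite -[m == _]subr_eq0 -/g; apply: leif_trans (expR_young_gap t a_gt0) _.
apply/leifP; have [->|g_neq0] := eqVneq g 0; first by rewrite mul0r subr0.
have g_gt0 : 0 < g by rewrite lt0r g_neq0.
rewrite ltrD2l ltrN2 ltr_pM2l ?ltr_expR; first lra.
by rewrite /k addr_gt0 ?invr_gt0.
Qed.

End RealInequalities.

(* The spectral theorem of [spectral] holds over algebraically closed fields, so real
   matrices are diagonalized through their complexification. *)
Section SpdSpectral.
Variable R : realType.
Local Open Scope sesquilinear_scope.
Local Notation C := R[i].
Local Notation cmx := (map_mx (real_complex R)).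

Lemma trmxC_real m n (A : 'M[R]_(m, n)) : (cmx A)^t* = cmx A^T.
Proof. by apply/matrixP => i j; rewrite !mxE -[Num.conj _]/(conjc _) conjc_real. Qed.

Lemma mx_ReIm m n (u : 'M[C]_(m, n)) :
  u = cmx (map_mx (@complex.Re R) u) + 'i%C *: cmx (map_mx (@complex.Im R) u).
Proof. by apply/matrixP => i j; rewrite !mxE -complexE. Qed.

Lemma trmxC_ReIm m n (A B : 'M[R]_(m, n)) :
  (cmx A + 'i%C *: cmx B)^t* = cmx A^T - 'i%C *: cmx B^T.
Proof.
apply/matrixP => i j; rewrite !mxE -[Num.conj _]/(conjc _).
by apply/eqP; rewrite eq_complex /= !mul0r !mul1r !subr0 !add0r !addr0 !eqxx.
Qed.

Lemma form_cmx_ReIm d (M : 'M[R]_d) (a b : 'rV[R]_d) : M^T = M ->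
  ((cmx a + 'i%C *: cmx b) *m cmx M *m (cmx a + 'i%C *: cmx b)^t*) 0 0 =
  ((a *m M *m a^T) 0 0 + (b *m M *m b^T) 0 0)%:C%C.
Proof.
move=> M_sym; rewrite trmxC_ReIm.
have cross : b *m M *m a^T = a *m M *m b^T.
  apply/matrixP => i j; rewrite !ord1 -[in RHS]M_sym -[a]trmxK -!trmx_mul.
  by rewrite trmxK [RHS]mxE mulmxA.
rewrite !mulmxDl !mulmxBr -!scalemxAl -!scalemxAr !scalerA -!map_mxM.
rewrite cross !(mxE, raddfB, raddfD) /=.
by apply/eqP; rewrite eq_complex /=; apply/andP; split; apply/eqP; ring.
Qed.

Lemma spd_form_ge0 d (M : 'M[R]_d) (v : 'rV[R]_d) : spd M -> 0 <= (v *m M *m v^T) 0 0.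
Proof.
move=> [_ M_pos]; have [->|v_neq0] := eqVneq v 0; last exact/ltW/M_pos.
by rewrite !mul0mx mxE.
Qed.

Lemma spd_form_cmx_gt0 d (M : 'M[R]_d) (u : 'rV[C]_d) : spd M -> u != 0 ->
  0 < (u *m cmx M *m u^t*) 0 0.
Proof.
move=> M_spd u_neq0; set a := map_mx (@complex.Re R) u; set b := map_mx (@complex.Im R) u.
rewrite (mx_ReIm u) -/a -/b form_cmx_ReIm ?M_spd.1 // ltcR.
have [a0|a_neq0] := eqVneq a 0; last by apply: ltr_wpDr; [exact: spd_form_ge0 | exact: M_spd.2].
have [b0|b_neq0] := eqVneq b 0; last by apply: ltr_wpDl; [exact: spd_form_ge0 | exact: M_spd.2].
by move: u_neq0; rewrite (mx_ReIm u) -/a -/b a0 b0 !map_mx0 scaler0 addr0 eqxx.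
Qed.

Lemma spd_unitary_diag d (M : 'M[R]_d) : spd M ->
  exists2 P : 'M[C]_d, P \is unitarymx &
  exists2 r : 'rV[R]_d, (forall i, 0 < r 0 i) & cmx M = P^t* *m diag_mx (cmx r) *m P.
Proof.
move=> M_spd; have M_normal : cmx M \is normalmx.
  by apply/normalmxP; rewrite trmxC_real M_spd.1.
have P_unitary := spectral_unitarymx (cmx M).
move/orthomx_spectralP: M_normal; rewrite invmx_unitary //.
set P := spectralmx _; set D := spectral_diag _ => M_eq.
have PPt : P *m P^t* = 1%:M by apply/unitarymxP.
have D_gt0 i : 0 < D 0 i.
  have /matrixP/(_ i i) : P *m cmx M *m P^t* = diag_mx D.
    by rewrite M_eq !mulmxA PPt mul1mx -mulmxA PPt mulmx1.
  rewrite [RHS]mxE eqxx mulr1n => <-.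
  have -> : (P *m cmx M *m P^t*) i i = (row i P *m cmx M *m (row i P)^t*) 0 0.
    rewrite !mxE; apply: eq_bigr => k _; rewrite !mxE; congr (_ * _).
    by apply: eq_bigr => l _; rewrite !mxE.
  apply: spd_form_cmx_gt0 => //; apply: contra_eq_neq (row_unitarymxP P_unitary i i).
  by move=> ->; rewrite dotmxE mul0mx mxE eqxx eq_sym oner_neq0.
have ReD i : (complex.Re (D 0 i))%:C%C = D 0 i.
  by rewrite [RHS]complexE (ger0_Im (ltW (D_gt0 i))) mulr0 addr0.
exists P => //; exists (map_mx (@complex.Re R) D) => [i|].
  by rewrite mxE -ltcR ReD raddf0.
rewrite M_eq; congr (_ *m diag_mx _ *m _).
by apply/matrixP => i j; rewrite !mxE ord1 ReD.
Qed.

Lemma det_unitary_conj d (P X : 'M[C]_d) : P \is unitarymx -> \det (P^t* *m X *m P) = \det X.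
Proof.
move=> /unitarymxP PPt.
by rewrite !det_mulmx mulrC mulrA -det_mulmx PPt det1 mul1r.
Qed.

Lemma spd_eigenvalues d (M : 'M[R]_d) : spd M -> exists r : 'rV[R]_d,
  [/\ forall i, 0 < r 0 i, \det M = \prod_i r 0 i,
    forall c a, \det (c%:M + a *: M) = \prod_i (c + a * r 0 i)
    & (M == 1%:M) = [forall i, r 0 i == 1]].
Proof.
move=> /spd_unitary_diag[P P_unitary [r r_gt0 M_eq]].
have PtP : P^t* *m P = 1%:M by rewrite -invmx_unitary // mulVmx // unitarymx_unit.
have PPt : P *m P^t* = 1%:M by apply/unitarymxP.
have detE c a : \det (c%:M + a *: M) = \prod_i (c + a * r 0 i).
  apply: (@complexI R); rewrite rmorph_prod -det_map_mx map_mxD map_mxZ map_scalar_mx M_eq.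
  have -> : (c%:C)%C%:M + (a%:C)%C *: (P^t* *m diag_mx (cmx r) *m P) =
      P^t* *m diag_mx (\row_i (c + a * r 0 i)%:C%C) *m P.
    have -> : diag_mx (\row_i (c + a * r 0 i)%:C%C) = (c%:C)%C%:M + (a%:C)%C *: diag_mx (cmx r).
      apply/matrixP => i j; rewrite !mxE rmorphD rmorphM.
      by case: eqP => _; rewrite ?mulr1n ?mulr0n ?mulr0 ?addr0.
    by rewrite mulmxDr mulmxDl mul_mx_scalar -scalemxAl PtP scalemx1 -scalemxAr -scalemxAl.
  by rewrite det_unitary_conj // det_diag; apply: eq_bigr => i _; rewrite mxE.
exists r; split => //.
  have := detE 0 1; rewrite scale1r -scalemx1 scale0r add0r => ->.
  by under eq_bigr do rewrite add0r mul1r.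
rewrite -(inj_eq (@map_mx_inj _ _ (real_complex R) d d)) map_scalar_mx M_eq.
apply/eqP/forallP => [Mc1 i | r1].
  have : diag_mx (cmx r) = P *m (P^t* *m diag_mx (cmx r) *m P) *m P^t*.
    by rewrite !mulmxA PPt mul1mx -mulmxA PPt mulmx1.
  rewrite Mc1 mulmx1 PPt => /matrixP/(_ i i).
  by rewrite !mxE eqxx !mulr1n => /complexI ->.
suff -> : diag_mx (cmx r) = 1%:M by rewrite mulmx1.
by apply/matrixP => i j; rewrite !mxE (eqP (r1 i)) rmorph1.
Qed.

End SpdSpectral.

Section SpdDet.
Variables (R : realType) (d : nat).
Implicit Types (M A : 'M[R]_d).

Lemma spd_det_gt0 M : spd M -> 0 < \det M.
Proof.
by move=> /spd_eigenvalues[r [r_gt0 -> _ _]]; apply: prodr_gt0.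
Qed.

Lemma spd_unitmx M : spd M -> M \in unitmx.
Proof. by move=> /spd_det_gt0 det_gt0; rewrite unitmxE unitfE gt_eqF. Qed.

Lemma spd_invmx M : spd M -> spd (invmx M).
Proof.
move=> M_spd; have M_unit := spd_unitmx M_spd; split; first by rewrite trmx_inv M_spd.1.
move=> v v_neq0; have : v *m invmx M != 0.
  by rewrite mulmx_free_eq0 // row_free_unit unitmx_inv.
by move=> /M_spd.2; rewrite trmx_mul trmx_inv M_spd.1 mulmxKV // mulmxA.
Qed.

Lemma spd_tr_conj M A : spd M -> A \in unitmx -> spd (A^T *m M *m A).
Proof.
move=> M_spd A_unit; split; first by rewrite !trmx_mul trmxK M_spd.1 mulmxA.
move=> v v_neq0; have : v *m A^T != 0 by rewrite mulmx_free_eq0 // row_free_unit unitmx_tr.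
by move=> /M_spd.2; rewrite trmx_mul trmxK !mulmxA.
Qed.

Lemma det_1Dscale_spd_gt0 M (a : R) : 0 <= a -> spd M -> 0 < \det (1%:M + a *: M).
Proof.
move=> a_ge0 /spd_eigenvalues[r [r_gt0 _ detE _]]; rewrite detE.
apply: prodr_gt0 => i _; apply: ltr_pwDl => //.
exact: mulr_ge0 a_ge0 (ltW (r_gt0 i)).
Qed.

Lemma ln_det_young M (a : R) : 0 < a -> spd M ->
  d%:R * ln (1 + a) + a / (1 + a) * ln (\det M) <= ln (\det (1%:M + a *: M))
  ?= iff (M == 1%:M).
Proof.
move=> a_gt0 /spd_eigenvalues[r [r_gt0 -> detE ->]].
have ar_gt0 i : 0 < 1 + a * r 0 i by rewrite addr_gt0 ?mulr_gt0.
rewrite detE !ln_prod //.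
rewrite mulr_sumr mulr_natl -[d in _ *+ d]card_ord -sumr_const -big_split /=.
by apply: leif_sum => i _; apply: ln_young.
Qed.

End SpdDet.

Section Minimizer.
Variables (R : realType) (d : nat) (a : R) (S0 L0 : 'M[R]_d).
Hypotheses (a_gt0 : 0 < a) (S0_spd : spd S0) (L0_spd : spd L0) (L0_sq : L0 *m L0 = S0).

Let relmx T := L0 *m invmx T *m L0.

Lemma relmx_spd T : spd T -> spd (relmx T).
Proof.
move=> T_spd; rewrite /relmx -{1}L0_spd.1.
exact: spd_tr_conj (spd_invmx T_spd) (spd_unitmx L0_spd).
Qed.

Lemma relmx_eq1 T : spd T -> (relmx T == 1%:M) = (T == S0).
Proof.
move=> T_spd; apply/eqP/eqP => [|->].
  rewrite /relmx -mulmxA => /mulmx1C; rewrite -mulmxA L0_sq => TS0.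
  by rewrite -[T]mulmx1 -TS0 mulmxA mulmxV ?mul1mx // spd_unitmx.
rewrite /relmx -mulmxA; apply: mulmx1C.
by rewrite -mulmxA L0_sq mulVmx // spd_unitmx.
Qed.

Lemma det_relmx T : \det (relmx T) = \det S0 / \det T.
Proof. by rewrite /relmx -L0_sq !det_mulmx det_inv mulrAC. Qed.

Lemma Psi_logE T : spd T -> Psi a L0 T =
  expR (- (a / 2 * ln (\det S0) + d%:R / 2 * ln (1 + a))) *
  Psi_log a (ln (\det (relmx T))) (ln (\det (1%:M + a *: relmx T)) - d%:R * ln (1 + a)).
Proof.
move=> T_spd; have relmx_det_gt0 := spd_det_gt0 (relmx_spd T_spd).
have det1D_gt0 := det_1Dscale_spd_gt0 (ltW a_gt0) (relmx_spd T_spd).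
have a1_gt0 : 0 < 1 + a by rewrite addr_gt0.
have S0_det_gt0 := spd_det_gt0 S0_spd; have T_det_gt0 := spd_det_gt0 T_spd.
have ln_det_T : ln (\det T) = ln (\det S0) - ln (\det (relmx T)).
  by rewrite det_relmx ln_div ?posrE ?invr_gt0 // opprB addrCA subrr addr0.
rewrite /Psi /Psi_log -/(relmx T) /powR !gt_eqF //.
rewrite ln_det_T -expRN -!expRD -mulrA -expRD [RHS]mulrBr [in RHS]mulrCA -!expRD.
by congr (expR _ - _ * expR _); field.
Qed.

Lemma Psi_leif T : spd T -> Psi a L0 S0 <= Psi a L0 T ?= iff (T == S0).
Proof.
move=> T_spd; rewrite (Psi_logE T_spd) (Psi_logE S0_spd).
set c := expR _; rewrite (mono_leif (ler_pM2l (expR_gt0 _ : 0 < c))).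
have /eqP relmx_S0 : relmx S0 == 1%:M by rewrite relmx_eq1.
rewrite relmx_S0 det1 ln1 scalemx1 -raddfD /= det_scalar lnXn ?addr_gt0 //.
rewrite -[ln (1 + a) *+ d]mulr_natl subrr.
set l := ln (\det (relmx T)); set m := ln (\det (1%:M + a *: relmx T)) - _.
have Y := ln_det_young a_gt0 (relmx_spd T_spd).
have -> : (T == S0) = (l == 0) && (m == a / (1 + a) * l).
  have -> : (m == a / (1 + a) * l) = (T == S0).
    by rewrite -relmx_eq1 // -(eq_leif Y) /m subr_eq eq_sym addrC.
  by rewrite andb_idl // => /eqP TS0; rewrite /l TS0 relmx_S0 det1 ln1.
by apply: Psi_log_leif => //; rewrite /m /l; have := Y.1; lra.
Qed.

End Minimizer.

Theorem lemma7 (R : realType) (d : nat) (alpha : R) (Sigma0 Lambda0 : 'M[R]_d) :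
  0 < alpha -> spd Sigma0 -> spd Lambda0 -> Lambda0 *m Lambda0 = Sigma0 ->
  forall S : 'M[R]_d,
    (spd S /\ forall T : 'M[R]_d, spd T -> Psi alpha Lambda0 S <= Psi alpha Lambda0 T)
    <-> S = Sigma0.
Proof.
move=> alpha_gt0 Sigma0_spd Lambda0_spd Lambda0_sq S.
have Psi_min := Psi_leif alpha_gt0 Sigma0_spd Lambda0_spd Lambda0_sq.
split => [[S_spd S_min] | ->].
  have [Psi_le Psi_eq] := Psi_min S S_spd.
  apply/eqP; rewrite -Psi_eq; apply/eqP/le_anti/andP.
  by split; [exact: Psi_le | exact: S_min Sigma0_spd].
split; first exact: Sigma0_spd.
move=> T T_spd; exact: (Psi_min T T_spd).1.
Qed.
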